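(* Let $\mathcal{M}=(M_i\colon i\in K)$ be a family of matroids on a common ground set $E$ which admits a covering. Then for every nonempty family $(X_\alpha\colon\alpha<\kappa)$ of $\mathcal{M}$-tight sets, both $\bigcup_{\alpha<\kappa}X_\alpha$ and $\bigcap_{\alpha<\kappa}X_\alpha$ are $\mathcal{M}$-tight.
   Context: Matroids here are possibly infinite (given by independence axioms: $\emptyset$ independent, subsets of independent sets independent, the augmentation axiom relative to maximal independent sets, and that every independent subset of any $X\subseteq E$ extends to a maximal independent subset of $X$). Circuits are minimal dependent sets; $X$ spans $e$ in $M$ if $e\in X$ or some circuit $C\ni e$ has $C\setminus\{e\}\subseteq X$. For $X\subseteq E$, $M\restriction X=(X,\mathcal{I}\cap\mathcal{P}(X))$ and $\mathcal{M}\restriction X=(M_i\restriction X\colon i\in K)$. A covering of a family $(N_i\colon i\in K)$ of matroids on a set $Y$ is a family $(R_i\colon i\in K)$ with $R_i$ independent in $N_i$ and $\bigcup_i R_i=Y$. A family is tight if it admits a covering and in every covering each $R_i$ spans the whole ground set in $N_i$. A set $X\subseteq E$ is $\mathcal{M}$-tight if $\mathcal{M}\restriction X$ is tight. *)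

Definition pset (T : Type) := T -> Prop.

Definition subset {T} (A B : pset T) : Prop := forall x, A x -> B x.
Definition emptyset {T} : pset T := fun _ => False.
Definition add1 {T} (A : pset T) (e : T) : pset T := fun x => A x \/ x = e.
Definition del1 {T} (A : pset T) (e : T) : pset T := fun x => A x /\ x <> e.

Record matroid (T : Type) := Matroid {
  mground : pset T;
  mindep : pset T -> Prop }.
Arguments Matroid {T}.
Arguments mground {T}.
Arguments mindep {T}.

Definition maximal_indep_in {T} (M : matroid T) (X B : pset T) : Prop :=
  mindep M B /\ subset B X /\
  forall B', mindep M B' -> subset B B' -> subset B' X -> subset B' B.

Definition maximal_indep {T} (M : matroid T) (B : pset T) : Prop :=
  maximal_indep_in M (mground M) B.

Definition is_matroid {T} (M : matroid T) : Prop :=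
  (forall I, mindep M I -> subset I (mground M)) /\
  mindep M emptyset /\
  (forall I J, mindep M J -> subset I J -> mindep M I) /\
  (forall I B, mindep M I -> ~ maximal_indep M I -> maximal_indep M B ->
     exists x, B x /\ ~ I x /\ mindep M (add1 I x)) /\
  (forall X I, subset X (mground M) -> mindep M I -> subset I X ->
     exists B, subset I B /\ maximal_indep_in M X B).

Definition dependent {T} (M : matroid T) (D : pset T) : Prop :=
  subset D (mground M) /\ ~ mindep M D.

Definition circuit {T} (M : matroid T) (C : pset T) : Prop :=
  dependent M C /\ forall D, subset D C -> dependent M D -> subset C D.

Definition spans {T} (M : matroid T) (X : pset T) (e : T) : Prop :=
  X e \/ exists C, circuit M C /\ C e /\ subset (del1 C e) X.

Definition restr {T} (M : matroid T) (X : pset T) : matroid T :=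
  Matroid X (fun A => mindep M A /\ subset A X).

Definition restr_fam {T K} (M : K -> matroid T) (X : pset T) : K -> matroid T :=
  fun i => restr (M i) X.

Definition covering {T K} (N : K -> matroid T) (Y : pset T) (R : K -> pset T) : Prop :=
  (forall i, mindep (N i) (R i)) /\ (forall e, Y e <-> exists i, R i e).

Definition tight {T K} (N : K -> matroid T) (Y : pset T) : Prop :=
  (exists R, covering N Y R) /\
  forall R, covering N Y R -> forall i e, Y e -> spans (N i) (R i) e.

Definition Mtight {T K} (M : K -> matroid T) (E X : pset T) : Prop :=
  subset X E /\ tight (restr_fam M X) X.

Definition bigunion {T A} (X : A -> pset T) : pset T := fun e => exists a, X a e.
Definition bigcap {T A} (X : A -> pset T) : pset T := fun e => forall a, X a e.

From Stdlib Require Import Classical IndefiniteDescription.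

(* Tightness of a set is witnessed by circuits, and a circuit of [M_k|X_a] is still a circuit
   of [M_k|U] for the union [U], so unions of tight sets are tight.
   For the intersection [Z], fix a global covering [S].  Tightness of every [X_a] makes
   [S_k ∩ X_a] span [Z] in [M_k]; since the fundamental circuit of [x] over [S_k] lies in every
   such spanning circuit, already [S_k ∩ Z] spans [Z].  Now if some covering [R] of [Z] had
   [R_i] not spanning [e], then [R_i + e] is independent; extending the sets [R_k] (with [e]
   added to [R_i]) to bases [B_k] of [M_k|Z] and adding [S_k ∩ X_a \ Z] keeps them independent
   and covers [X_a] with [e] used twice.  Dropping [e] from the second occurrence gives a
   covering of [X_a] in which [e] is not spanned, contradicting tightness of [X_a]. *)

Section Matroid.

Context {T : Type} (M : matroid T).
Hypothesis HM : is_matroid M.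

Lemma indep_ground I : mindep M I -> subset I (mground M).
Proof. destruct HM as (H & _). exact (H I). Qed.

Lemma indep_subset I J : mindep M J -> subset I J -> mindep M I.
Proof. destruct HM as (_ & _ & H & _). exact (H I J). Qed.

Lemma indep_augment I B : mindep M I -> ~ maximal_indep M I -> maximal_indep M B ->
  exists x, B x /\ ~ I x /\ mindep M (add1 I x).
Proof. destruct HM as (_ & _ & _ & H & _). exact (H I B). Qed.

Lemma indep_extend X I : subset X (mground M) -> mindep M I -> subset I X ->
  exists B, subset I B /\ maximal_indep_in M X B.
Proof. destruct HM as (_ & _ & _ & _ & H). exact (H X I). Qed.

Lemma maximal_indep_in_add1 X B x :
  maximal_indep_in M X B -> X x -> mindep M (add1 B x) -> B x.
Proof.
  intros (_ & HBX & HBmax) Hx HBx.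
  apply (HBmax (add1 B x) HBx); [intros z Hz; left; exact Hz | | right; reflexivity].
  intros z [Hz | ->]; [exact (HBX z Hz) | exact Hx].
Qed.

Lemma base_maximal B J : maximal_indep M B -> mindep M J -> subset B J -> subset J B.
Proof. intros (_ & _ & HBmax) HJ HBJ. exact (HBmax J HJ HBJ (indep_ground J HJ)). Qed.

Lemma base_of_maximal_indep_in W B0 B :
  subset W (mground M) -> maximal_indep M B0 -> subset B0 W ->
  maximal_indep_in M W B -> maximal_indep M B.
Proof.
  intros HW HB0 HB0W HB. apply NNPP; intro HnB.
  destruct (indep_augment B B0 (proj1 HB) HnB HB0) as (x & HB0x & HBx & HBxi).
  exact (HBx (maximal_indep_in_add1 W B x HB (HB0W x HB0x) HBxi)).
Qed.

Lemma base_between W B0 I :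
  subset W (mground M) -> maximal_indep M B0 -> subset B0 W -> mindep M I -> subset I W ->
  exists B, maximal_indep M B /\ subset I B /\ subset B W.
Proof.
  intros HW HB0 HB0W HI HIW.
  destruct (indep_extend W I HW HI HIW) as (B & HIB & HB).
  exists B. split; [exact (base_of_maximal_indep_in W B0 B HW HB0 HB0W HB) |].
  split; [exact HIB | exact (proj1 (proj2 HB))].
Qed.

Lemma base_inter_maximal_indep_in X B B' :
  maximal_indep_in M X B -> maximal_indep M B' -> subset B B' ->
  forall z, B' z -> X z -> B z.
Proof.
  intros HB HB' HBB' z Hz HXz. apply (maximal_indep_in_add1 X B z HB HXz).
  apply (indep_subset _ B' (proj1 HB')). intros w [Hw | ->]; [exact (HBB' w Hw) | exact Hz].
Qed.

Lemma base_diff_subset X B B' J :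
  maximal_indep_in M X B -> maximal_indep M B' -> subset B B' ->
  maximal_indep M J -> (forall z, J z -> ~ X z -> B' z) ->
  forall z, B' z -> ~ X z -> J z.
Proof.
  intros HB HB' HBB' HJ HJB' z HB'z HXz.
  assert (HBX := proj1 (proj2 HB)).
  set (P := fun z => B z \/ (J z /\ ~ X z)).
  assert (HPB' : subset P B') by (intros w [Hw | (HJw & HXw)]; [exact (HBB' w Hw) | exact (HJB' w HJw HXw)]).
  destruct (base_between (fun z => B z \/ J z) J P) as (N & HN & HPN & HNW);
    [intros w [Hw | Hw]; [exact (indep_ground B' (proj1 HB') w (HBB' w Hw))
                         | exact (indep_ground J (proj1 HJ) w Hw)]
    | exact HJ | intros w Hw; right; exact Hw | exact (indep_subset P B' (proj1 HB') HPB')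
    | intros w [Hw | (Hw & _)]; [left | right]; exact Hw |].
  assert (HNP : subset N P).
  { intros w HNw. destruct (classic (X w)) as [HXw | HXw].
    - left. apply (maximal_indep_in_add1 X B w HB HXw), (indep_subset _ N (proj1 HN)).
      intros v [Hv | ->]; [exact (HPN v (or_introl Hv)) | exact HNw].
    - right. destruct (HNW w HNw) as [HBw | HJw]; [exfalso; exact (HXw (HBX w HBw)) | split; assumption]. }
  assert (HB'N : subset B' N).
  { apply (base_maximal N B' HN (proj1 HB')). intros w Hw. exact (HPB' w (HNP w Hw)). }
  destruct (HNP z (HB'N z HB'z)) as [HBz | (HJz & _)]; [exfalso; exact (HXz (HBX z HBz)) | exact HJz].
Qed.

(* Axiom (I3) only augments towards bases of [M] itself; this is (I3) for the restriction [M|X]. *)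
Lemma indep_augment_in X I y B :
  subset X (mground M) -> mindep M I -> subset I X -> X y -> ~ I y -> mindep M (add1 I y) ->
  maximal_indep_in M X B -> exists x, B x /\ ~ I x /\ mindep M (add1 I x).
Proof.
  intros HX HI HIX Hy Hny HIy HB.
  destruct (indep_extend (mground M) B) as (B' & HBB' & HB');
    [intros z Hz; exact Hz | exact (proj1 HB) | intros z Hz; exact (HX z (proj1 (proj2 HB) z Hz)) |].
  pose proof (base_inter_maximal_indep_in X B B' HB HB' HBB') as HB'X.
  destruct (base_between (fun z => I z \/ B' z) B' I) as (I' & HI' & HII' & HI'W);
    [intros z [Hz | Hz]; [exact (HX z (HIX z Hz)) | exact (indep_ground B' (proj1 HB') z Hz)]
    | exact HB' | intros z Hz; right; exact Hz | exact HI | intros z Hz; left; exact Hz |].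
  destruct (classic (exists x, I' x /\ B x /\ ~ I x)) as [(x & HI'x & HBx & HIx) | Hno].
  { exists x. split; [exact HBx | split; [exact HIx |]].
    apply (indep_subset _ I' (proj1 HI')). intros z [Hz | ->]; [exact (HII' z Hz) | exact HI'x]. }
  assert (HI'B : forall z, I' z -> B z -> I z).
  { intros z HI'z HBz. apply NNPP; intro HIz. apply Hno. exists z; auto. }
  destruct (base_between (fun z => add1 I y z \/ I' z) I' (add1 I y)) as (I'' & HI'' & HyI'' & HI''W);
    [intros z [[Hz | ->] | Hz]; [exact (HX z (HIX z Hz)) | exact (HX y Hy)
                                | exact (indep_ground I' (proj1 HI') z Hz)]
    | exact HI' | intros z Hz; right; exact Hz | exact HIy | intros z Hz; left; exact Hz |].
  assert (HI''B' : forall z, I'' z -> ~ X z -> B' z).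
  { intros z HI''z HXz.
    destruct (HI''W z HI''z) as [[Hz | ->] | Hz]; [exfalso; exact (HXz (HIX z Hz)) | contradiction |].
    destruct (HI'W z Hz) as [HIz | HB'z]; [exfalso; exact (HXz (HIX z HIz)) | exact HB'z]. }
  pose proof (base_diff_subset X B B' I'' HB HB' HBB' HI'' HI''B') as HB'I''.
  assert (HI'I'' : subset I' I'').
  { intros z HI'z. destruct (HI'W z HI'z) as [HIz | HB'z]; [exact (HyI'' z (or_introl HIz)) |].
    destruct (classic (X z)) as [HXz | HXz].
    - exact (HyI'' z (or_introl (HI'B z HI'z (HB'X z HB'z HXz)))).
    - exact (HB'I'' z HB'z HXz). }
  assert (HyI' : I' y).
  { apply (base_maximal I' I'' HI' (proj1 HI'') HI'I''). apply HyI''. right; reflexivity. }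
  exfalso. apply Hny. destruct (HI'W y HyI') as [HIy' | HB'y]; [exact HIy' |].
  exact (HI'B y HyI' (HB'X y HB'y Hy)).
Qed.

(* For [I] independent and [I + e] dependent, this is the unique circuit inside [I + e]. *)
Definition fund_circuit (I : pset T) (e : T) : pset T :=
  fun y => y = e \/ (I y /\ mindep M (add1 (del1 I y) e)).

Lemma fund_circuit_subset I e : subset (fund_circuit I e) (add1 I e).
Proof. intros y [-> | [Hy _]]; [right; reflexivity | left; exact Hy]. Qed.

Lemma fund_circuit_min I e D :
  mindep M I -> subset D (add1 I e) -> ~ mindep M D -> subset (fund_circuit I e) D.
Proof.
  intros HI HD HnD y Hy. apply NNPP; intro HDy. apply HnD.
  destruct Hy as [-> | [_ Hyi]]; [apply (indep_subset D I HI) | apply (indep_subset D _ Hyi)];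
    intros z Hz; destruct (HD z Hz) as [HIz | ->]; try (exfalso; exact (HDy Hz)).
  - exact HIz.
  - left. split; [exact HIz | intros ->; exact (HDy Hz)].
  - right; reflexivity.
Qed.

Lemma fund_circuit_dep I e :
  mindep M I -> mground M e -> ~ I e -> ~ mindep M (add1 I e) -> ~ mindep M (fund_circuit I e).
Proof.
  intros HI He HIe HIei Hfc.
  assert (HIeg : subset (add1 I e) (mground M)).
  { intros z [Hz | ->]; [exact (indep_ground I HI z Hz) | exact He]. }
  destruct (indep_extend (add1 I e) _ HIeg Hfc (fund_circuit_subset I e)) as (B & HfcB & HB).
  destruct (classic (exists f, I f /\ ~ B f)) as [(f & HIf & HBf) | Hno].
  - assert (HIfi : mindep M (del1 I f)) by (apply (indep_subset _ I HI); intros z [Hz _]; exact Hz).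
    destruct (indep_augment_in (add1 I e) (del1 I f) f B HIeg HIfi) as (x & HBx & Hx & Hxi).
    + intros z [Hz _]; left; exact Hz.
    + left; exact HIf.
    + intros [_ Hff]; exact (Hff eq_refl).
    + apply (indep_subset _ I HI). intros z [[Hz _] | ->]; [exact Hz | exact HIf].
    + exact HB.
    + destruct (proj1 (proj2 HB) x HBx) as [HIx | ->].
      * apply Hx. split; [exact HIx | intros ->; exact (HBf HBx)].
      * apply HBf, HfcB. right. split; [exact HIf | exact Hxi].
  - apply HIei, (indep_subset _ B (proj1 HB)). intros z [HIz | ->].
    + apply NNPP; intro HBz. apply Hno. exists z; auto.
    + apply HfcB. left; reflexivity.
Qed.

Lemma spans_or_indep_add1 I e :
  mindep M I -> mground M e -> spans M I e \/ mindep M (add1 I e).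
Proof.
  intros HI He.
  destruct (classic (I e)) as [HIe | HIe]; [left; left; exact HIe |].
  destruct (classic (mindep M (add1 I e))) as [HIei | HIei]; [right; exact HIei |].
  left; right. exists (fund_circuit I e). split; [split; [split |] | split].
  - intros z Hz. destruct (fund_circuit_subset I e z Hz) as [HIz | ->];
      [exact (indep_ground I HI z HIz) | exact He].
  - exact (fund_circuit_dep I e HI He HIe HIei).
  - intros D HD [_ HDi]. apply (fund_circuit_min I e D HI); [| exact HDi].
    intros z Hz. exact (fund_circuit_subset I e z (HD z Hz)).
  - left; reflexivity.
  - intros z [Hz Hze]. destruct (fund_circuit_subset I e z Hz) as [HIz | ->];
      [exact HIz | exfalso; exact (Hze eq_refl)].
Qed.

Lemma spans_not_indep_add1 I e : ~ I e -> spans M I e -> ~ mindep M (add1 I e).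
Proof.
  intros HIe [HIe' | (C & ((_ & HC) & _) & _ & HCI)] HIei; [exact (HIe HIe') |].
  apply HC, (indep_subset C _ HIei). intros z Hz.
  destruct (classic (z = e)) as [-> | Hze]; [right; reflexivity | left; exact (HCI z (conj Hz Hze))].
Qed.

Lemma indep_not_spans I J e : mindep M J -> J e -> subset I J -> ~ I e -> ~ spans M I e.
Proof.
  intros HJ HJe HIJ HIe Hsp.
  apply (spans_not_indep_add1 I e HIe Hsp), (indep_subset _ J HJ).
  intros z [Hz | ->]; [exact (HIJ z Hz) | exact HJe].
Qed.

Lemma not_indep_add1_bigcap {A} (a0 : A) (X : A -> pset T) I x :
  mindep M I -> mground M x -> ~ I x ->
  (forall a, spans M (fun y => I y /\ X a y) x) ->
  ~ mindep M (add1 (fun y => I y /\ bigcap X y) x).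
Proof.
  intros HI Hx HIx Hsp.
  assert (Hdep : forall a, ~ mindep M (add1 (fun y => I y /\ X a y) x)).
  { intro a. apply spans_not_indep_add1; [intros [HIx' _]; exact (HIx HIx') | exact (Hsp a)]. }
  assert (Hfc : forall a, subset (fund_circuit I x) (add1 (fun y => I y /\ X a y) x)).
  { intro a. apply (fund_circuit_min I x _ HI); [| exact (Hdep a)].
    intros z [[Hz _] | ->]; [left; exact Hz | right; reflexivity]. }
  intro Hcap. apply (fund_circuit_dep I x HI Hx HIx).
  - intro HIxi. apply (Hdep a0), (indep_subset _ _ HIxi).
    intros z [[Hz _] | ->]; [left; exact Hz | right; reflexivity].
  - apply (indep_subset _ _ Hcap). intros z Hz.
    destruct (classic (z = x)) as [-> | Hzx]; [right; reflexivity |].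
    left. split.
    + destruct (Hfc a0 z Hz) as [[HIz _] | Hzx']; [exact HIz | exfalso; exact (Hzx Hzx')].
    + intro a. destruct (Hfc a z Hz) as [[_ HXz] | Hzx']; [exact HXz | exfalso; exact (Hzx Hzx')].
Qed.

Lemma indep_union_outside Z S B :
  subset Z (mground M) -> mindep M S ->
  (forall x, Z x -> ~ S x -> ~ mindep M (add1 (fun y => S y /\ Z y) x)) ->
  maximal_indep_in M Z B -> mindep M (fun x => B x \/ (S x /\ ~ Z x)).
Proof.
  intros HZ HS Hcl HB. apply NNPP; intro Hdep.
  set (W := fun x => B x \/ (S x /\ ~ Z x)).
  assert (HSg := indep_ground S HS).
  assert (HBZ := proj1 (proj2 HB)).
  destruct (indep_extend W B) as (Q & HBQ & HQ);
    [intros z [Hz | [Hz _]]; [exact (HZ z (HBZ z Hz)) | exact (HSg z Hz)]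
    | exact (proj1 HB) | intros z Hz; left; exact Hz |].
  destruct (classic (exists s, W s /\ ~ Q s)) as [(s & HWs & HQs) | Hno].
  2:{ apply Hdep, (indep_subset W Q (proj1 HQ)). intros z Hz.
      apply NNPP; intro HQz. apply Hno. exists z; auto. }
  assert (Hs : S s /\ ~ Z s) by (destruct HWs as [HBs | Hs]; [exfalso; exact (HQs (HBQ s HBs)) | exact Hs]).
  set (U := fun x => B x \/ S x).
  assert (HQU : maximal_indep_in M U Q).
  { split; [exact (proj1 HQ) | split].
    - intros z Hz. destruct (proj1 (proj2 HQ) z Hz) as [HBz | [HSz _]]; [left | right]; assumption.
    - intros Q' HQ' HQQ' HQ'U. apply (proj2 (proj2 HQ) Q' HQ' HQQ'). intros x Hx.
      destruct (classic (Z x)) as [HZx | HZx].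
      + left. apply (maximal_indep_in_add1 Z B x HB HZx), (indep_subset _ Q' HQ').
        intros w [Hw | ->]; [exact (HQQ' w (HBQ w Hw)) | exact Hx].
      + destruct (HQ'U x Hx) as [HBx | HSx]; [left; exact HBx | right; split; assumption]. }
  set (L := fun x => (S x /\ Z x) \/ (Q x /\ ~ Z x)).
  assert (HLS : subset L S).
  { intros z [[Hz _] | [HQz HZz]]; [exact Hz |].
    destruct (proj1 (proj2 HQ) z HQz) as [HBz | [HSz _]]; [exfalso; exact (HZz (HBZ z HBz)) | exact HSz]. }
  destruct (indep_augment_in U L s Q) as (x & HQx & HLx & HLxi).
  - intros z [Hz | Hz]; [exact (HZ z (HBZ z Hz)) | exact (HSg z Hz)].
  - exact (indep_subset L S HS HLS).
  - intros z Hz. right. exact (HLS z Hz).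
  - right; exact (proj1 Hs).
  - intros [[_ HZs] | [HQs' _]]; [exact (proj2 Hs HZs) | exact (HQs HQs')].
  - apply (indep_subset _ S HS). intros z [Hz | ->]; [exact (HLS z Hz) | exact (proj1 Hs)].
  - exact HQU.
  - destruct (classic (Z x)) as [HZx | HZx].
    + apply (Hcl x HZx); [intro HSx; apply HLx; left; split; assumption |].
      apply (indep_subset _ _ HLxi). intros w [Hw | ->]; [left; left; exact Hw | right; reflexivity].
    + apply HLx. right. split; assumption.
Qed.

Lemma circuit_restr X C :
  subset X (mground M) -> (circuit (restr M X) C <-> circuit M C /\ subset C X).
Proof.
  intros HX. split.
  - intros ((HCX & HC) & HCmin). split; [| exact HCX]. split.
    + split; [intros z Hz; exact (HX z (HCX z Hz)) | intro HCi; exact (HC (conj HCi HCX))].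
    + intros D HDC (_ & HD). apply HCmin; [exact HDC |].
      split; [intros z Hz; exact (HCX z (HDC z Hz)) | intros (HDi & _); exact (HD HDi)].
  - intros (((_ & HC) & HCmin) & HCX). split.
    + split; [exact HCX | intros (HCi & _); exact (HC HCi)].
    + intros D HDC (HDX & HD). apply HCmin; [exact HDC |].
      split; [intros z Hz; exact (HX z (HDX z Hz)) | intro HDi; exact (HD (conj HDi HDX))].
Qed.

Lemma spans_restr X I e :
  subset X (mground M) -> subset I X -> X e -> (spans (restr M X) I e <-> spans M I e).
Proof.
  intros HX HIX HXe. unfold spans. split.
  - intros [HIe | (C & HC & HCe & HCI)]; [left; exact HIe | right].
    exists C. split; [exact (proj1 (proj1 (circuit_restr X C HX) HC)) | split; assumption].
  - intros [HIe | (C & HC & HCe & HCI)]; [left; exact HIe | right].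
    exists C. split; [| split; assumption].
    apply (circuit_restr X C HX). split; [exact HC |]. intros z Hz.
    destruct (classic (z = e)) as [-> | Hze]; [exact HXe | exact (HIX z (HCI z (conj Hz Hze)))].
Qed.

End Matroid.

Section Family.

Context {T K : Type} (E : pset T) (M : K -> matroid T).
Hypothesis HM : forall k, is_matroid (M k).
Hypothesis HE : forall k x, mground (M k) x <-> E x.

Lemma subset_ground X k : subset X E -> subset X (mground (M k)).
Proof. intros HXE z Hz. exact (proj2 (HE k z) (HXE z Hz)). Qed.

Lemma covering_restr_ground S : covering M E S -> covering (restr_fam M E) E S.
Proof.
  intros (HS & HScov). split; [| exact HScov].
  intro k. split; [exact (HS k) |]. intros z Hz. exact (proj1 (HE k z) (indep_ground _ (HM k) _ (HS k) z Hz)).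
Qed.

Lemma covering_restr_subset Y X R :
  covering (restr_fam M Y) Y R -> subset X Y ->
  covering (restr_fam M X) X (fun k x => R k x /\ X x).
Proof.
  intros (HR & HRcov) HXY. split.
  - intro k. split; [| intros z (_ & Hz); exact Hz].
    apply (indep_subset _ (HM k) _ (R k) (proj1 (HR k))). intros z (Hz & _); exact Hz.
  - intro x. split.
    + intro Hx. destruct (proj1 (HRcov x) (HXY x Hx)) as (k & Hk). exists k. split; assumption.
    + intros (k & _ & Hx). exact Hx.
Qed.

Lemma covering_restr_exists X :
  (exists S, covering M E S) -> subset X E -> exists R, covering (restr_fam M X) X R.
Proof.
  intros (S & HS) HXE. eexists. exact (covering_restr_subset E X S (covering_restr_ground S HS) HXE).
Qed.

Lemma Mtight_spans X R k e :
  Mtight M E X -> covering (restr_fam M X) X R -> X e -> spans (M k) (R k) e.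
Proof.
  intros (HXE & _ & Htight) HR HXe.
  apply (spans_restr (M k) X (R k) e (subset_ground X k HXE) (proj2 (proj1 HR k)) HXe).
  exact (Htight R HR k e HXe).
Qed.

Lemma Mtight_intro X :
  subset X E -> (exists R, covering (restr_fam M X) X R) ->
  (forall R, covering (restr_fam M X) X R -> forall k e, X e -> spans (M k) (R k) e) ->
  Mtight M E X.
Proof.
  intros HXE HR Hsp. split; [exact HXE | split; [exact HR |]].
  intros R' HR' k e HXe.
  apply (spans_restr (M k) X (R' k) e (subset_ground X k HXE) (proj2 (proj1 HR' k)) HXe).
  exact (Hsp R' HR' k e HXe).
Qed.

Lemma Mtight_bigunion {A} (X : A -> pset T) :
  (exists S, covering M E S) -> (forall a, Mtight M E (X a)) -> Mtight M E (bigunion X).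
Proof.
  intros Hcov HX.
  assert (HUE : subset (bigunion X) E) by (intros z (a & Hz); exact (proj1 (HX a) z Hz)).
  apply (Mtight_intro _ HUE (covering_restr_exists _ Hcov HUE)).
  intros R HR k e (a & HXe).
  assert (HRa := covering_restr_subset _ (X a) R HR (fun z Hz => ex_intro _ a Hz)).
  destruct (Mtight_spans (X a) _ k e (HX a) HRa HXe) as [(HRe & _) | (C & HC & HCe & HCR)];
    [left; exact HRe | right].
  exists C. split; [exact HC | split; [exact HCe |]].
  intros z Hz. exact (proj1 (HCR z Hz)).
Qed.

Lemma bigcap_not_indep_add1 {A} (a0 : A) (X : A -> pset T) S k x :
  (forall a, Mtight M E (X a)) -> covering (restr_fam M E) E S -> bigcap X x -> ~ S k x ->
  ~ mindep (M k) (add1 (fun y => S k y /\ bigcap X y) x).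
Proof.
  intros HX HS Hx HSx.
  apply (not_indep_add1_bigcap (M k) (HM k) a0 X (S k) x (proj1 (proj1 HS k))
           (subset_ground (X a0) k (proj1 (HX a0)) x (Hx a0)) HSx).
  intro a. exact (Mtight_spans (X a) _ k x (HX a)
                    (covering_restr_subset E (X a) S HS (proj1 (HX a))) (Hx a)).
Qed.

Lemma maximal_indep_in_disjoint X Z S B i j e :
  Mtight M E X -> subset Z X -> covering (restr_fam M E) E S ->
  (forall k x, Z x -> ~ S k x -> ~ mindep (M k) (add1 (fun y => S k y /\ Z y) x)) ->
  (forall k, maximal_indep_in (M k) Z (B k)) -> (forall x, Z x -> exists k, B k x) ->
  B i e -> B j e -> i = j.
Proof.
  intros HX HZX HS Hcl HB HBcov HBie HBje. apply NNPP; intro Hij.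
  assert (HXE := proj1 HX).
  assert (HBZ : forall k, subset (B k) Z) by (intro k; exact (proj1 (proj2 (HB k)))).
  set (SX := fun k x => S k x /\ X x).
  assert (HSX := covering_restr_subset E X S HS HXE).
  set (Tk := fun k x => B k x \/ (SX k x /\ ~ Z x)).
  assert (HT : forall k, mindep (M k) (Tk k)).
  { intro k. apply (indep_union_outside (M k) (HM k) Z (SX k) (B k)).
    - exact (subset_ground Z k (fun z Hz => HXE z (HZX z Hz))).
    - exact (proj1 (proj1 HSX k)).
    - intros x HZx HSXx Hi. apply (Hcl k x HZx); [intro HSx; exact (HSXx (conj HSx (HZX x HZx))) |].
      apply (indep_subset _ (HM k) _ _ Hi).
      intros z [(Hz & HZz) | ->]; [left; split; [split |] | right]; auto.
    - exact (HB k). }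
  set (T' := fun k x => Tk k x /\ ~ (k = j /\ x = e)).
  assert (HT' : covering (restr_fam M X) X T').
  { split.
    - intro k. split.
      + apply (indep_subset _ (HM k) _ (Tk k) (HT k)). intros z (Hz & _); exact Hz.
      + intros z ([HBz | ((_ & HXz) & _)] & _); [exact (HZX z (HBZ k z HBz)) | exact HXz].
    - intro x. split.
      + intro HXx. destruct (classic (Z x)) as [HZx | HZx].
        * destruct (classic (x = e)) as [-> | Hxe].
          -- exists i. split; [left; exact HBie | intros (-> & _); exact (Hij eq_refl)].
          -- destruct (HBcov x HZx) as (k & Hk).
             exists k. split; [left; exact Hk | intros (_ & Hxe'); exact (Hxe Hxe')].
        * destruct (proj1 (proj2 HS x) (HXE x HXx)) as (k & Hk).
          exists k. split; [right; split; [split |]; assumption |].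
          intros (_ & ->). exact (HZx (HBZ i e HBie)).
      + intros (k & [HBx | ((_ & HXx) & _)] & _); [exact (HZX x (HBZ k x HBx)) | exact HXx]. }
  apply (indep_not_spans (M j) (HM j) (T' j) (Tk j) e (HT j) (or_introl HBje)).
  - intros z (Hz & _); exact Hz.
  - intros (_ & Hn). exact (Hn (conj eq_refl eq_refl)).
  - exact (Mtight_spans X T' j e HX HT' (HZX e (HBZ j e HBje))).
Qed.

Lemma Mtight_bigcap {A} (a0 : A) (X : A -> pset T) :
  (exists S, covering M E S) -> (forall a, Mtight M E (X a)) -> Mtight M E (bigcap X).
Proof.
  intros Hcov HX. set (Z := bigcap X).
  assert (HZX : subset Z (X a0)) by (intros z Hz; exact (Hz a0)).
  assert (HZE : subset Z E) by (intros z Hz; exact (proj1 (HX a0) z (Hz a0))).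
  apply (Mtight_intro Z HZE (covering_restr_exists Z Hcov HZE)).
  intros R (HR & HRcov) i e HZe. apply NNPP; intro Hns.
  destruct (spans_or_indep_add1 (M i) (HM i) (R i) e (proj1 (HR i)) (subset_ground Z i HZE e HZe))
    as [Hsp | HRei]; [exact (Hns Hsp) |].
  destruct (proj1 (HRcov e) HZe) as (j & HRje).
  destruct Hcov as (S & HS). apply covering_restr_ground in HS.
  set (R' := fun k x => R k x \/ (k = i /\ x = e)).
  destruct (functional_choice (fun k B => subset (R' k) B /\ maximal_indep_in (M k) Z B)) as (B & HB).
  { intro k. apply (indep_extend (M k) (HM k) Z (R' k) (subset_ground Z k HZE)).
    - destruct (classic (k = i)) as [-> | Hki].
      + apply (indep_subset _ (HM i) _ _ HRei).
        intros z [Hz | (_ & ->)]; [left; exact Hz | right; reflexivity].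
      + apply (indep_subset _ (HM k) _ _ (proj1 (HR k))).
        intros z [Hz | (Hki' & _)]; [exact Hz | exfalso; exact (Hki Hki')].
    - intros z [Hz | (_ & ->)]; [exact (proj2 (HR k) z Hz) | exact HZe]. }
  assert (Hij : i = j).
  { apply (maximal_indep_in_disjoint (X a0) Z S B i j e (HX a0) HZX HS).
    - intros k x HZx HSx. exact (bigcap_not_indep_add1 a0 X S k x HX HS HZx HSx).
    - intro k. exact (proj2 (HB k)).
    - intros x HZx. destruct (proj1 (HRcov x) HZx) as (k & Hk).
      exists k. exact (proj1 (HB k) x (or_introl Hk)).
    - exact (proj1 (HB i) e (or_intror (conj eq_refl eq_refl))).
    - exact (proj1 (HB j) e (or_introl HRje)). }
  subst j. apply Hns. left. exact HRje.
Qed.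

End Family.

Theorem proposition3p6 (T : Type) (E : pset T) (K : Type) (M : K -> matroid T)
  (HM : forall i, is_matroid (M i))
  (HE : forall i x, mground (M i) x <-> E x)
  (Hcov : exists R, covering M E R)
  (A : Type) (a0 : A) (X : A -> pset T)
  (HX : forall a, Mtight M E (X a)) :
  Mtight M E (bigunion X) /\ Mtight M E (bigcap X).
Proof.
  split.
  - exact (Mtight_bigunion E M HM HE X Hcov HX).
  - exact (Mtight_bigcap E M HM HE a0 X Hcov HX).
Qed.
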